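(* Let $(s_0,s_1,\dots)$ and $(\delta_0,\delta_1,\dots)$ be non-negative real sequences with $s_{k+1}\le\delta_k s_k+c$ for all $k$, where $c\ge0$, and $\sum_{t=0}^\infty\delta_t\le L$. Then for all $t$, $s_t\le e^{L}\left(e^{-t}s_0+c\frac{e}{e-1}\right)$. *)

From HB Require Import structures.
From mathcomp Require Import all_boot all_order all_algebra.
From mathcomp Require Import all_classical all_reals all_analysis.
Set Implicit Arguments. Unset Strict Implicit. Unset Printing Implicit Defensive.

From HB Require Import structures.
From mathcomp Require Import all_boot all_order all_algebra.
From mathcomp Require Import all_classical all_reals all_analysis.
From mathcomp Require Import ring.
Set Implicit Arguments. Unset Strict Implicit. Unset Printing Implicit Defensive.
Import Order.TTheory GRing.Theory Num.Theory.
Local Open Scope ring_scope.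

(* Since [x <= expR (x - 1)], the recurrence gives
   [s (k+1) <= expR (delta k) * q * s k + c] with [q = expR (-1)].  Unrolling it
   with the invariant [s t <= expR (delta 0 + ... + delta (t-1)) * (q^t s 0 + c/(1-q))]
   and bounding the partial sums of [delta] by [L] gives the claim, because
   [1/(1 - expR (-1)) = e/(e-1)]. *)

Section ExpRFacts.
Variable R : realType.

Lemma ler_expR_subr1 (x : R) : x <= expR (x - 1).
Proof. by apply: le_trans (expR_ge1Dx _); rewrite addrC subrK. Qed.

Lemma expRN_natr (t : nat) : expR (- t%:R) = expR (-1) ^+ t :> R.
Proof. by rewrite -expRM_natl mulrN1. Qed.

Lemma expR1_div_expR1_subr1 : expR 1 / (expR 1 - 1) = (1 - expR (-1))^-1 :> R.
Proof.
have e_neq0 : expR 1 != 0 :> R by rewrite gt_eqF // expR_gt0.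
have eB1_neq0 : expR 1 - 1 != 0 :> R by rewrite subr_eq0 gt_eqF // expR_gt1.
by rewrite expRN; field; rewrite e_neq0 eB1_neq0.
Qed.

End ExpRFacts.

Lemma psum_le_nneseries (R : realType) (u : nat -> R) (L : R) :
  (forall k, 0 <= u k) -> (\sum_(0 <= k <oo) (u k)%:E <= L%:E)%E ->
  forall n, \sum_(0 <= k < n) u k <= L.
Proof.
move=> u_ge0 uL n; rewrite -lee_fin; apply: le_trans uL.
by rewrite -sumEFin; apply: nneseries_lim_ge => k _ _; exact: u_ge0.
Qed.

Section DiscreteGronwall.
Variables (R : realType) (q c : R) (s d : nat -> R).
Hypotheses (q_ge0 : 0 <= q) (q_lt1 : q < 1) (c_ge0 : 0 <= c).
Hypothesis d_ge0 : forall k, 0 <= d k.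
Hypothesis s_rec : forall k, s k.+1 <= expR (d k) * q * s k + c.

Lemma discrete_gronwall t :
  s t <= expR (\sum_(0 <= k < t) d k) * (q ^+ t * s 0 + c / (1 - q)).
Proof.
have q_neq1 : 1 - q != 0 by rewrite subr_eq0 gt_eqF.
elim: t => [|t IH].
  rewrite big_geq // expR0 expr0 !mul1r lerDl divr_ge0 // subr_ge0 ltW //.
set S := \sum_(0 <= k < t) d k.
have expS1_ge1 : 1 <= expR (S + d t).
  by apply: le_trans (expR_ge1Dx _); rewrite lerDl addr_ge0 // sumr_ge0.
(* The geometric tail absorbs [c] because [q / (1 - q) + 1 = 1 / (1 - q)]. *)
have -> : expR (\sum_(0 <= k < t.+1) d k) * (q ^+ t.+1 * s 0 + c / (1 - q)) =
    expR (d t) * q * (expR S * (q ^+ t * s 0 + c / (1 - q)))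
    + expR (S + d t) * c.
  by rewrite big_nat_recr //= -/S !expRD exprS; field.
apply: le_trans (s_rec t) _; apply: lerD; last by rewrite ler_peMl.
by apply: ler_wpM2l => //; rewrite mulr_ge0 ?expR_ge0.
Qed.

End DiscreteGronwall.

Theorem lemma3 (R : realType) (s delta : nat -> R) (c L : R)
  (hs : forall k, 0 <= s k) (hd : forall k, 0 <= delta k) (hc : 0 <= c)
  (hrec : forall k, s k.+1 <= delta k * s k + c)
  (hsum : (\sum_(0 <= t <oo) (delta t)%:E <= L%:E)%E) :
  forall t : nat,
    s t <= expR L * (expR (- (t%:R)) * s 0 + c * (expR 1 / (expR 1 - 1))).
Proof.
move=> t; set q := expR (-1) : R.
have q_lt1 : q < 1 by rewrite expR_lt1 ltrN10.
have s_rec k : s k.+1 <= expR (delta k) * q * s k + c.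
  apply: le_trans (hrec k) _; rewrite lerD2r -expRD ler_wpM2r //.
  exact: ler_expR_subr1.
apply: le_trans (discrete_gronwall (expR_ge0 (-1)) q_lt1 hc hd s_rec t) _.
rewrite expRN_natr expR1_div_expR1_subr1 -/q.
apply: ler_wpM2r; last by rewrite ler_expR; exact: psum_le_nneseries.
by rewrite addr_ge0 ?mulr_ge0 ?exprn_ge0 ?invr_ge0 ?subr_ge0 ?expR_ge0 ?(ltW q_lt1).
Qed.
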